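(* Suppose that $|Y|\ge 3$, that every model $j\in\{1,\dots,m\}$ is an unconstrained learner, and that $C$ is a nondegenerate ensemble choice aggregator on $S(Y)$. Then: (1) there exists $S^*\subseteq S(Y)$ such that $C$ violates on $S^*$ at least one of the following three properties: insertion/deletion consistency, ensemble unanimity, model choice reversal; (2) if moreover the map $s:X\to S(Y)$ is surjective, then this $S^*$ is observable by $s$.
   Context: Let $Y$ be a nonempty set of labels, $X$ a set (the feature space), and $m\ge 2$ an integer (the number of models). For each $j\in\{1,\dots,m\}$ let $S_j(Y)\subseteq\mathbb{R}^{|Y|}$ be a set of score vectors whose coordinates are indexed by labels (write $w_{d(y)}$ for the coordinate of $w$ corresponding to label $y$), and let $S(Y)=\prod_{j=1}^m S_j(Y)$. An element $z\in S(Y)$ is written $z=(z_{j,d(y)})_{j,y}$, where $z_{j,d(y)}$ denotes model $j$'s score for label $y$. Each model has a scoring function $s_j:X\to S_j(Y)$, and $s:X\to S(Y)$ is $s(x)=(s_j(x))_{j=1}^m$. Model $j$ is an unconstrained learner if for every complete and transitive binary relation $R$ on $Y$, $S_j(Y)\cap W(Y,R)\neq\emptyset$, where $W(Y,R)=\{w\in\mathbb{R}^{|Y|}: \text{for all } y,y'\in Y,\ y\,R\,y' \iff w_{d(y)}\ge w_{d(y')}\}$. A set $S^*\subseteq S(Y)$ is observable by $s$ if for every $z\in S^*$ there is $x\in X$ with $s(x)=z$. An ensemble choice aggregator is a set-valued function $C:(2^Y\setminus\{\emptyset\})\times S(Y)\to 2^Y\setminus\{\emptyset\}$ such that for every nonempty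 $Y^*\subseteq Y$ and every $z\in S(Y)$: (i) $C(Y^*,z)\subseteq Y^*$; and (ii) for every $y\in Y^*$, if there does not exist $y'\in Y^*$ with $\{y'\}=C(\{y,y'\},z)$, then $y\in C(Y^*,z)$. $C$ is nondegenerate if there is no $j$ such that for all $y,y'\in Y$ and all $z\in S(Y)$, $z_{j,d(y)}>z_{j,d(y')}$ implies $\{y\}=C(\{y,y'\},z)$. Insertion/deletion consistency: for all $z\in S(Y)$ and all nonempty $Y_1^*\subseteq Y_2^*\subseteq Y$, $Y_1^*\cap C(Y_2^*,z)\neq\emptyset$ implies $C(Y_1^*,z)=Y_1^*\cap C(Y_2^*,z)$. Ensemble unanimity: for all $y,y'\in Y$ and all $z\in S(Y)$, if $z_{j,d(y)}>z_{j,d(y')}$ for all $j$ then $\{y\}=C(\{y,y'\},z)$. Model choice reversal: for all $y,y'\in Y$ and all $z,z'\in S(Y)$, whenever $y\in C(\{y,y'\},z)$, $y'\notin C(\{y,y'\},z)$ and $y'\in C(\{y,y'\},z')$, there exists $j$ with $z_{j,d(y)}>z_{j,d(y')}$ and $z'_{j,d(y)}<z'_{j,d(y')}$. ''$C$ violates a property on $S^*$'' means that the property fails when its universal quantification over score profiles is restricted to profiles in $S^*$ (i.e. the failure is witnessed by profiles in $S^*$). *)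

From HB Require Import structures.
From mathcomp Require Import all_boot all_order all_algebra.
From mathcomp Require Import reals.
Set Implicit Arguments. Unset Strict Implicit. Unset Printing Implicit Defensive.
Import Order.TTheory GRing.Theory Num.Theory.
Local Open Scope ring_scope.

(* A score vector in R^{|Y|} is a function Y -> R
   (coordinate w_{d(y)} is  w y).
   A score ens_profile z in S(Y) = prod_j S_j(Y) is a function 'I_m -> Y -> R,
   with z j y = z_{j,d(y)}. *)

Definition ens_profile (R : realType) (Y : finType) (m : nat) := 'I_m -> Y -> R.

Definition ens_in_SY (R : realType) (Y : finType) (m : nat)
  (Sj : 'I_m -> (Y -> R) -> Prop) (z : ens_profile R Y m) : Prop :=
  forall j, Sj j (z j).

Definition ens_complete_rel (Y : Type) (Rel : Y -> Y -> Prop) :=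
  forall y y', Rel y y' \/ Rel y' y.
Definition ens_transitive_rel (Y : Type) (Rel : Y -> Y -> Prop) :=
  forall y1 y2 y3, Rel y1 y2 -> Rel y2 y3 -> Rel y1 y3.

Definition ens_W (R : realType) (Y : finType) (Rel : Y -> Y -> Prop) (w : Y -> R) :=
  forall y y', Rel y y' <-> w y' <= w y.

Definition ens_unconstrained_learner (R : realType) (Y : finType)
  (Sj : (Y -> R) -> Prop) : Prop :=
  forall Rel : Y -> Y -> Prop, ens_complete_rel Rel -> ens_transitive_rel Rel ->
    exists w, Sj w /\ ens_W Rel w.

Definition ens_aggregator (R : realType) (Y : finType) (m : nat) :=
  {set Y} -> ens_profile R Y m -> {set Y}.

Definition ens_ensemble_choice_aggregator (R : realType) (Y : finType) (m : nat)
  (Sj : 'I_m -> (Y -> R) -> Prop) (C : ens_aggregator R Y m) : Prop :=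
  forall (Ystar : {set Y}) (z : ens_profile R Y m), Ystar != set0 -> ens_in_SY Sj z ->
    [/\ C Ystar z != set0,
        C Ystar z \subset Ystar &
        forall y, y \in Ystar ->
          ~ (exists y', y' \in Ystar /\ C [set y; y'] z = [set y']) ->
          y \in C Ystar z].

Definition ens_nondegenerate (R : realType) (Y : finType) (m : nat)
  (Sj : 'I_m -> (Y -> R) -> Prop) (C : ens_aggregator R Y m) : Prop :=
  ~ exists j : 'I_m, forall (y y' : Y) (z : ens_profile R Y m), ens_in_SY Sj z ->
      z j y' < z j y -> C [set y; y'] z = [set y].

Definition ens_insertion_deletion_consistency_on (R : realType) (Y : finType) (m : nat)
  (Sstar : ens_profile R Y m -> Prop) (C : ens_aggregator R Y m) : Prop :=
  forall (z : ens_profile R Y m) (Y1 Y2 : {set Y}), Sstar z ->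
    Y1 != set0 -> Y1 \subset Y2 ->
    Y1 :&: C Y2 z != set0 -> C Y1 z = Y1 :&: C Y2 z.

Definition ens_ensemble_unanimity_on (R : realType) (Y : finType) (m : nat)
  (Sstar : ens_profile R Y m -> Prop) (C : ens_aggregator R Y m) : Prop :=
  forall (y y' : Y) (z : ens_profile R Y m), Sstar z ->
    (forall j, z j y' < z j y) -> C [set y; y'] z = [set y].

Definition ens_model_choice_reversal_on (R : realType) (Y : finType) (m : nat)
  (Sstar : ens_profile R Y m -> Prop) (C : ens_aggregator R Y m) : Prop :=
  forall (y y' : Y) (z z' : ens_profile R Y m), Sstar z -> Sstar z' ->
    y \in C [set y; y'] z -> y' \notin C [set y; y'] z ->
    y' \in C [set y; y'] z' ->
    exists j, z j y' < z j y /\ z' j y < z' j y'.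

Definition ens_observable (R : realType) (Y : finType) (m : nat) (X : Type)
  (s : X -> ens_profile R Y m) (Sstar : ens_profile R Y m -> Prop) : Prop :=
  forall z, Sstar z -> exists x, s x = z.

From HB Require Import structures.
From mathcomp Require Import all_boot all_order all_algebra.
From mathcomp Require Import reals boolp lra.
Import Order.TTheory GRing.Theory Num.Theory.
Local Open Scope ring_scope.
Set Implicit Arguments. Unset Strict Implicit.

(* Restricted to pairwise choices, the three properties turn C into an Arrow
   social welfare function: insertion/deletion consistency makes "a is chosen
   from {a, b}" a complete transitive relation, ensemble unanimity is the
   Pareto principle, model choice reversal is independence of irrelevant
   alternatives, and unconstrained learners give an unrestricted domain.
   Arrow's decisive-coalition argument then yields a dictator model, which
   nondegeneracy forbids.  The witness S* is all of S(Y), observable whenever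
   s is onto. *)

Lemma exists_fresh (T : finType) (a b : T) :
  (3 <= #|T|)%N -> exists c, c != a /\ c != b.
Proof.
move=> T3; have : (0 < #|~: [set a; b]|)%N.
  rewrite -(leq_add2l #|[set a; b]|) cardsC cards2 addn1.
  by case: (a != b) => //; apply: ltnW.
by case/card_gt0P => c; rewrite !inE negb_or => /andP; exists c.
Qed.

Lemma exists_distinct3 (T : finType) :
  (3 <= #|T|)%N -> exists x y z : T, [/\ y != x, z != x & z != y].
Proof.
move=> T3; have /card_gt0P [x _] : (0 < #|T|)%N by apply: leq_trans T3.
have [y [yx _]] := exists_fresh x x T3.
have [z [zx zy]] := exists_fresh x y T3.
by exists x, y, z.
Qed.

Lemma pair_contagion (T : finType) (P : T -> T -> Prop) :
  (3 <= #|T|)%N ->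
  (forall a b c, a != b -> c != a -> c != b -> P a b -> P a c /\ P c b) ->
  forall a b, a != b -> P a b -> forall x y, x != y -> P x y.
Proof.
move=> T3 grow a b ab Pab.
have from_a y : y != a -> P a y.
  move=> ya; have [->|yb] := eqVneq y b; first exact: Pab.
  by case: (grow a b y ab ya yb Pab).
have not_to_a x y : x != y -> y != a -> P x y.
  move=> xy ya; have [->|xa] := eqVneq x a; first exact: from_a.
  by case: (grow a y x _ xa xy (from_a y ya)); rewrite 1?eq_sym.
move=> x y xy; have [ya|ya] := eqVneq y a; last exact: not_to_a.
have [c [cx ca]] := exists_fresh x a T3; rewrite ya in xy *.
by case: (grow x c a _ _ _ (not_to_a x c _ ca)); rewrite // eq_sym.
Qed.

Definition top2 {R : numDomainType} {T : eqType} (a b t : T) : R :=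
  if t == a then 2 else if t == b then 1 else 0.

Lemma top2_lt_fst (R : realDomainType) (T : eqType) (a b c : T) :
  c != a -> top2 a b c < top2 a b a :> R.
Proof. by move=> ca; rewrite /top2 eqxx (negbTE ca); case: ifP => _; lra. Qed.

Lemma top2_lt_snd (R : realDomainType) (T : eqType) (a b c : T) :
  b != a -> c != a -> c != b -> top2 a b c < top2 a b b :> R.
Proof.
by move=> ba ca cb; rewrite /top2 (negbTE ba) (negbTE ca) (negbTE cb) eqxx; lra.
Qed.

Definition score_bound (R : numDomainType) (T : finType) (w : T -> R) : R :=
  \sum_t `|w t| + 1.

Lemma lt_score_bound (R : realDomainType) (T : finType) (w : T -> R) t :
  - score_bound w < w t < score_bound w.
Proof.
rewrite -ltr_norml /score_bound (bigD1 t) //= -addrA ltrDl.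
by rewrite ltr_wpDl // sumr_ge0.
Qed.

Section Arrow.

Variables (R : realType) (Y : finType) (m : nat).
Variables (Sj : 'I_m -> (Y -> R) -> Prop) (C : ens_aggregator R Y m).
Local Notation S := (ens_in_SY Sj).

Definition wpref z (a b : Y) := a \in C [set a; b] z.
Definition spref z (a b : Y) := ~ wpref z b a.

Definition decisive_for (G : {set 'I_m}) a b := forall z, S z ->
  (forall i, i \in G -> z i b < z i a) -> spref z a b.

Definition almost_decisive_for (G : {set 'I_m}) a b := forall z, S z ->
  (forall i, i \in G -> z i b < z i a) ->
  (forall i, i \notin G -> z i a < z i b) -> spref z a b.

Definition decisive G := forall a b, a != b -> decisive_for G a b.

Lemma decisive_forW G a b : decisive_for G a b -> almost_decisive_for G a b.
Proof. by move=> Gab z Sz zG _; apply: Gab. Qed.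

Hypothesis agg : ens_ensemble_choice_aggregator Sj C.

Lemma set2_neq0 (a b : Y) : [set a; b] != set0.
Proof. by apply/set0Pn; exists a; rewrite !inE eqxx. Qed.

Lemma wpref_total z a b : S z -> wpref z a b \/ wpref z b a.
Proof.
move=> Sz; have [/set0Pn [t tC] sub _] := agg (set2_neq0 a b) Sz.
have := subsetP sub t tC; rewrite !inE => /orP [] /eqP tE; rewrite tE in tC.
  by left.
by right; rewrite /wpref setUC.
Qed.

Lemma pair_choice_singleton z a b :
  S z -> a != b -> C [set a; b] z = [set a] <-> spref z a b.
Proof.
move=> Sz ab; rewrite /spref /wpref [[set b; a]]setUC.
have [/set0Pn [t tC] sub _] := agg (set2_neq0 a b) Sz.
split=> [-> | bC]; first by rewrite inE eq_sym (negbTE ab).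
have inC u : u \in C [set a; b] z -> u = a.
  move=> uC; have := subsetP sub u uC; rewrite !inE => /orP [] /eqP // ub.
  by move: uC; rewrite ub => /bC.
apply/setP => u; rewrite inE; apply/idP/eqP => [/inC // | ->].
by move: (tC); rewrite (inC t tC).
Qed.

Hypothesis idc : ens_insertion_deletion_consistency_on S C.

Lemma mem_choice_subset z (Y1 Y2 : {set Y}) t x :
  S z -> Y1 \subset Y2 -> t \in Y1 -> t \in C Y2 z ->
  (x \in C Y1 z) = (x \in Y1) && (x \in C Y2 z).
Proof.
move=> Sz sub tY1 tC.
have ne : Y1 != set0 by apply/set0Pn; exists t.
have meet : Y1 :&: C Y2 z != set0 by apply/set0Pn; exists t; rewrite inE tY1.
by rewrite (idc Sz ne sub meet) inE.
Qed.

Lemma wpref_trans z a b c : S z -> wpref z a b -> wpref z b c -> wpref z a c.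
Proof.
move=> Sz ab bc; set T := [set a; b; c].
have Tne : T != set0 by apply/set0Pn; exists a; rewrite /T !inE eqxx.
have [/set0Pn [t tC] sub _] := agg Tne Sz.
have [aT bT cT] : [/\ a \in T, b \in T & c \in T].
  by rewrite /T !inE !eqxx !orbT.
have pairT u v : u \in T -> v \in T -> [set u; v] \subset T.
  by move=> uT vT; apply/subsetP => x /set2P [] ->.
have via u v : u \in T -> v \in T -> v \in C T z -> wpref z u v -> u \in C T z.
  move=> uT vT vC.
  rewrite /wpref (mem_choice_subset _ Sz (pairT u v uT vT) _ vC).
    by case/andP.
  by rewrite !inE eqxx orbT.
have aC : a \in C T z.
  have := subsetP sub t tC; rewrite !inE => /orP [/orP [] | ] /eqP tE;
    rewrite tE in tC.
  - exact: tC.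
  - exact: via _ _ aT bT tC ab.
  - exact: via _ _ aT bT (via _ _ bT cT tC bc) ab.
by rewrite /wpref (mem_choice_subset _ Sz (pairT a c aT cT) _ aC) !inE eqxx.
Qed.

Lemma wpref_spref_trans z a b c :
  S z -> wpref z a b -> spref z b c -> spref z a c.
Proof. by move=> Sz ab ncb ca; apply: ncb; apply: wpref_trans ca ab. Qed.

Lemma spref_trans z a b c : S z -> spref z a b -> spref z b c -> spref z a c.
Proof.
move=> Sz nba; have [ab|//] := wpref_total a b Sz.
exact: wpref_spref_trans.
Qed.

Hypothesis una : ens_ensemble_unanimity_on S C.

Lemma spref_unanimous z a b :
  S z -> a != b -> (forall i, z i b < z i a) -> spref z a b.
Proof. by move=> Sz ab lt; apply/(pair_choice_singleton Sz ab); apply: una. Qed.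

Hypothesis mcr : ens_model_choice_reversal_on S C.

Lemma spref_transfer z z' a b : S z -> S z' -> spref z a b ->
  (forall i, z' i a < z' i b -> z i a < z i b) -> spref z' a b.
Proof.
move=> Sz Sz' nba agree ba'; have [ab|//] := wpref_total a b Sz.
move: nba ba'; rewrite /spref /wpref [[set b; a]]setUC => /negP nba ba'.
have [j [lt lt']] := mcr Sz Sz' ab nba ba'.
by have := agree j lt'; lra.
Qed.

Hypothesis unc : forall j, ens_unconstrained_learner (Sj j).

Lemma exists_profile_ordered_as (f : ens_profile R Y m) :
  exists2 z, S z & forall i y y', z i y < z i y' <-> f i y < f i y'.
Proof.
have learn i : exists w, Sj i w /\ ens_W (fun y y' => f i y' <= f i y) w.
  apply: unc => [y y' | y1 y2 y3 le12 le23]; last exact: le_trans le23 le12.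
  by case: (lerP (f i y') (f i y)) => le; [left | right; apply: ltW].
have [w /all_and2 [Sw Ww]] := choice learn.
exists w => // i y y'; rewrite !ltNge.
by split=> /negP le; apply/negP => le'; apply: le; apply/(Ww i).
Qed.

Lemma almost_decisive_for_witness (G : {set 'I_m}) a b u : S u ->
  (forall i, i \notin G -> u i a < u i b) -> spref u a b ->
  almost_decisive_for G a b.
Proof.
move=> Su uGc uab z Sz zG _; apply: (spref_transfer Su Sz uab) => i lt.
by have [/zG | /uGc //] := boolP (i \in G); lra.
Qed.

Lemma almost_decisive_for_right (G : {set 'I_m}) a b c :
  almost_decisive_for G a b -> a != b -> c != a -> c != b -> decisive_for G a c.
Proof.
move=> Gab ab ca cb w Sw wG.
(* Outside G, b is raised above every label while w's a-c comparisons stay. *)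
pose f i t := if i \in G then top2 a b t
              else if t == b then score_bound (w i) else w i t.
have [v Sv vf] := exists_profile_ordered_as f.
have vab : spref v a b.
  apply: Gab => // i iG; apply/vf; rewrite /f ?iG ?(negbTE iG).
    by apply: top2_lt_fst; rewrite eq_sym.
  by rewrite eqxx (negbTE ab); case/andP: (lt_score_bound (w i) a).
have vbc : spref v b c.
  apply: spref_unanimous => // [|i]; first by rewrite eq_sym.
  apply/vf; rewrite /f; case: (i \in G).
    by apply: top2_lt_snd; rewrite // eq_sym.
  by rewrite eqxx (negbTE cb); case/andP: (lt_score_bound (w i) c).
apply: (spref_transfer Sv Sw (spref_trans Sv vab vbc)) => i lt.
have [iG|iG] := boolP (i \in G); first by have := wG i iG; lra.
by apply/vf; rewrite /f (negbTE iG) (negbTE ab) (negbTE cb).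
Qed.

Lemma almost_decisive_for_left (G : {set 'I_m}) a b c :
  almost_decisive_for G a b -> a != b -> c != a -> c != b -> decisive_for G c b.
Proof.
move=> Gab ab ca cb w Sw wG.
pose f i t := if i \in G then top2 c a t
              else if t == a then - score_bound (w i) else w i t.
have [v Sv vf] := exists_profile_ordered_as f.
have vca : spref v c a.
  apply: spref_unanimous => // i; apply/vf; rewrite /f.
  case: (i \in G); first by apply: top2_lt_fst; rewrite eq_sym.
  by rewrite eqxx (negbTE ca); case/andP: (lt_score_bound (w i) c).
have vab : spref v a b.
  apply: Gab => // i iG; apply/vf; rewrite /f ?iG ?(negbTE iG).
    by apply: top2_lt_snd; rewrite // eq_sym.
  by rewrite eqxx eq_sym (negbTE ab); case/andP: (lt_score_bound (w i) b).
apply: (spref_transfer Sv Sw (spref_trans Sv vca vab)) => i lt.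
have [iG|iG] := boolP (i \in G); first by have := wG i iG; lra.
by apply/vf; rewrite /f (negbTE iG) (negbTE ca) eq_sym (negbTE ab).
Qed.

Hypothesis Y3 : (3 <= #|Y|)%N.

Lemma almost_decisive_decisive (G : {set 'I_m}) a b :
  almost_decisive_for G a b -> a != b -> decisive G.
Proof.
move=> Gab ab; have [c [ca cb]] := exists_fresh a b Y3.
have Gac := almost_decisive_for_right Gab ab ca cb.
apply: (pair_contagion (P := decisive_for G) Y3) Gac.
- move=> p q r pq rp rq /decisive_forW Gpq.
  by split; [apply: almost_decisive_for_right Gpq _ rp rq
            | apply: almost_decisive_for_left Gpq _ rp rq].
- by rewrite eq_sym.
Qed.

Lemma decisive_setT : decisive setT.
Proof. by move=> a b ab z Sz zG; apply: spref_unanimous => // i; apply: zG. Qed.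

Lemma not_decisive_set0 : ~ decisive set0.
Proof.
move=> dec0; have [x [y [_ [yx _ _]]]] := exists_distinct3 Y3.
have [v Sv _] := exists_profile_ordered_as (fun _ _ => 0).
have [xy | yx'] := wpref_total x y Sv.
- by apply: (dec0 y x yx v Sv) => //= i; rewrite inE.
- by apply: (dec0 x y _ v Sv) => //= [|i]; rewrite ?inE // eq_sym.
Qed.

Lemma decisive_split (G : {set 'I_m}) j :
  decisive G -> decisive [set j] \/ decisive (G :\ j).
Proof.
move=> dG; have [x [y [z [yx zx zy]]]] := exists_distinct3 Y3.
pose f i : Y -> R :=
  if i == j then top2 x y else if i \in G then top2 z x else top2 y z.
have [v Sv vf] := exists_profile_ordered_as f.
have vxy : spref v x y.
  apply: (dG x y _ v Sv) => [|i iG]; first by rewrite eq_sym.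
  apply/vf; rewrite /f; case: (i == j); first exact: top2_lt_fst.
  by rewrite iG; apply: top2_lt_snd; rewrite // eq_sym.
(* Either G :\ j is almost decisive for z over y, or j is for x over z. *)
have [vzx | /negP vxz] := boolP (wpref v z x).
  right; apply: (@almost_decisive_decisive _ z y); last exact: zy.
  apply: (almost_decisive_for_witness Sv);
    last exact: wpref_spref_trans vzx vxy.
  move=> i iGc; apply/vf; rewrite /f; move: iGc; rewrite !inE negb_and negbK.
  have [_ _ | _ /= /negbTE ->] := eqVneq i j; first exact: top2_lt_snd.
  exact: top2_lt_fst.
left; apply: (@almost_decisive_decisive _ x z); last by rewrite eq_sym.
apply: (almost_decisive_for_witness Sv) => // i; rewrite inE => ij.
apply/vf; rewrite /f (negbTE ij); case: (i \in G).
  by apply: top2_lt_fst; rewrite eq_sym.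
by apply: top2_lt_snd; rewrite // eq_sym.
Qed.

Lemma exists_decisive_singleton : exists j, decisive [set j].
Proof.
suff small n : forall G : {set 'I_m}, (#|G| <= n)%N -> decisive G ->
    exists j, decisive [set j].
  exact: small _ setT (leqnn _) decisive_setT.
elim: n => [|n IH] G.
  by rewrite leqn0 cards_eq0 => /eqP -> /not_decisive_set0.
have [-> _ /not_decisive_set0 //|[j jG] Gn dG] := set_0Vmem G.
have [|dGj] := decisive_split j dG; first by exists j.
by apply: (IH (G :\ j)) => //; move: Gn; rewrite (cardsD1 j G) jG add1n ltnS.
Qed.

Lemma exists_dictator : exists j, forall y y' z, S z ->
  z j y' < z j y -> C [set y; y'] z = [set y].
Proof.
have [j dj] := exists_decisive_singleton; exists j => y y' z Sz lt.
have yy' : y != y' by apply: contraTneq lt => ->; rewrite ltxx.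
by apply/(pair_choice_singleton Sz yy'); apply: dj => // i /set1P ->.
Qed.

End Arrow.

Theorem theorem1 (R : realType) (Y : finType) (X : Type) (m : nat)
  (Sj : 'I_m -> (Y -> R) -> Prop) (s : X -> ens_profile R Y m)
  (C : ens_aggregator R Y m) :
  (3 <= #|Y|)%N -> (2 <= m)%N ->
  (forall x, ens_in_SY Sj (s x)) ->
  (forall j, ens_unconstrained_learner (Sj j)) ->
  ens_ensemble_choice_aggregator Sj C ->
  ens_nondegenerate Sj C ->
  exists Sstar : ens_profile R Y m -> Prop,
    (forall z, Sstar z -> ens_in_SY Sj z) /\
    (~ ens_insertion_deletion_consistency_on Sstar C \/
     ~ ens_ensemble_unanimity_on Sstar C \/
     ~ ens_model_choice_reversal_on Sstar C) /\
    ((forall z, ens_in_SY Sj z -> exists x, s x = z) -> ens_observable s Sstar).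
Proof.
move=> Y3 _ _ unc agg nondeg.
exists (ens_in_SY Sj); split=> //; split; last by move=> onto z /onto.
have [idc|] := EM (ens_insertion_deletion_consistency_on (ens_in_SY Sj) C);
  last by left.
have [una|] := EM (ens_ensemble_unanimity_on (ens_in_SY Sj) C);
  last by right; left.
have [mcr|] := EM (ens_model_choice_reversal_on (ens_in_SY Sj) C);
  last by right; right.
by case: nondeg; apply: exists_dictator agg idc una mcr unc Y3.
Qed.
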